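(* Let $u=0$ and $\theta\in(1/2,1]$. If there exists $p\in\mathbb R$ such that $$F\big(A^{\frac p2-1}BA^{-\frac p2}\big)\subseteq D(0,1)=\{z\in\mathbb C:|z|<1\},$$ then the $\theta$-method is unconditionally stable, i.e. it is stable for every step size $h=\tau/m$, $m\in\mathbb N$.
   Context: Let $N\in\mathbb N$, $\tau>0$, let $A\in M_N(\mathbb C)$ be Hermitian positive definite and $B\in M_N(\mathbb C)$ arbitrary, and consider the delay differential equation $y'(t)=-Ay(t)+By(t-\tau)$. Fix $\theta\in[0,1]$, $u\in[0,1)$ and $m\in\mathbb N$ (with $m\ge2$ if $u>0$), and set the step size $h=\tau/(m-u)$. The $\theta$-method (with linear interpolation of the delayed term) is the recursion, for $n\ge0$ and arbitrary starting values $y_{-m},\dots,y_0\in\mathbb C^N$, $$y_{n+1}=y_n+h(1-\theta)\big[-Ay_n+B((1-u)y_{n-m}+u\,y_{n-m+1})\big]+h\theta\big[-Ay_{n+1}+B((1-u)y_{n-m+1}+u\,y_{n-m+2})\big].$$ The method is called stable (for these $\theta,u,m,h$) if for every choice of starting values $y_n\to0$ as $n\to\infty$. For $s\in\mathbb R$, $A^s$ is defined through the spectral decomposition of $A$. For $M\in M_N(\mathbb C)$, $F(M)=\{x^*Mx: x\in\mathbb C^N,\ x^*x=1\}$ is the field of values. *)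

From HB Require Import structures.
From mathcomp Require Import all_boot all_order all_algebra.
From mathcomp Require Import complex.
From mathcomp Require Import reals exp.
Set Implicit Arguments. Unset Strict Implicit. Unset Printing Implicit Defensive.
Import Order.TTheory GRing.Theory Num.Theory.
Local Open Scope ring_scope.
Local Open Scope complex_scope.

Section Defs.
Variable R : realType.
Local Notation C := R[i].

Definition ctrmx (m n : nat) (M : 'M[C]_(m, n)) : 'M[C]_(n, m) :=
  (map_mx (@conjc R) M)^T.

Definition sesq (n : nat) (x : 'cV[C]_n) (M : 'M[C]_n) (y : 'cV[C]_n) : C :=
  (ctrmx x *m M *m y) 0 0.

Definition hermitian (n : nat) (A : 'M[C]_n) : Prop := ctrmx A = A.

Definition posdef (n : nat) (A : 'M[C]_n) : Prop :=
  hermitian A /\ forall x : 'cV[C]_n, x != 0 -> 0 < sesq x A x.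

Definition unitary_mx (n : nat) (U : 'M[C]_n) : Prop := U *m ctrmx U = 1%:M.

Definition fov (n : nat) (M : 'M[C]_n) : C -> Prop :=
  fun z => exists x : 'cV[C]_n, sesq x 1%:M x = 1 /\ z = sesq x M x.

Definition unit_disc : C -> Prop := fun z => `|z| < 1.

Definition spectral_decomp (n : nat) (A : 'M[C]_n) (U : 'M[C]_n) (d : 'rV[R]_n) :=
  unitary_mx U /\ A = U *m diag_mx (map_mx (real_complex R) d) *m ctrmx U.

(* A^s computed from a spectral decomposition (U, d) with d > 0 *)
Definition spec_pow (n : nat) (U : 'M[C]_n) (d : 'rV[R]_n) (s : R) : 'M[C]_n :=
  U *m diag_mx (map_mx (fun e => (powR e s)%:C) d) *m ctrmx U.

(* y_k -> 0 (componentwise, equivalently in any norm on C^N) *)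
Definition cv0 (n : nat) (y : nat -> 'cV[C]_n) : Prop :=
  forall eps : R, 0 < eps -> exists K : nat, forall k : nat, (K <= k)%N ->
    forall i : 'I_n, `|y k i 0| < eps%:C.

(* The theta-method with linear interpolation, indices shifted by m:
   z k = y_(k - m), so z 0 .. z m are the starting values y_(-m) .. y_0, and
   the recursion for n >= 0 reads as below. *)
Definition theta_rec (n : nat) (A B : 'M[C]_n) (theta u : R) (m : nat) (h : R)
    (z : nat -> 'cV[C]_n) : Prop :=
  forall k : nat,
    z (k + m).+1 = z (k + m)
      + (h * (1 - theta))%:C *: (- (A *m z (k + m))
            + B *m ((1 - u)%:C *: z k + u%:C *: z k.+1))
      + (h * theta)%:C *: (- (A *m z (k + m).+1)
            + B *m ((1 - u)%:C *: z k.+1 + u%:C *: z k.+2)).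

Definition theta_stable (n : nat) (A B : 'M[C]_n) (theta u : R) (m : nat) (h : R) :=
  forall z : nat -> 'cV[C]_n, theta_rec A B theta u m h z -> cv0 z.

End Defs.

(* Write the theta-method as Q(S) z = 0, where S is the shift of sequences and
     Q(x) = x^m (x - 1) I + x^m mu(x) A - mu(x) B,   mu(x) = h (theta x + 1 - theta).
   Multiplying by the adjugate of Q, every component of z satisfies the scalar
   recurrence (det Q)(S) z_i = 0, so it tends to 0 once all roots of det Q lie in
   the open unit disc.  Suppose Q(x) x0 = 0 with x0 = A^(-p/2) w <> 0 and |x| >= 1.
   Pairing Q(x) x0 = 0 with A^(p-1) x0 gives
     x^m ((x - 1) w^* A^-1 w + mu |w|^2) = mu w^* A^(p/2-1) B A^(-p/2) w.
   The right side has modulus < |mu| |w|^2 by the field-of-values hypothesis,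
   whereas Re (conj mu (x - 1)) >= 0 for theta > 1/2, so the left side has
   modulus >= |mu| |w|^2. *)

From HB Require Import structures.
From mathcomp Require Import all_boot all_order all_algebra.
From mathcomp Require Import complex.
From mathcomp Require Import reals exp normedtype sequences.
From mathcomp Require Import ring lra.
Import Order.TTheory GRing.Theory Num.Theory Normc.
Set Implicit Arguments. Unset Strict Implicit. Unset Printing Implicit Defensive.
Local Open Scope ring_scope.
Local Open Scope complex_scope.

Section ComplexModulus.
Variable R : realType.
Local Notation C := R[i].

Lemma norm_normc (z : C) : `|z| = (normc z)%:C. Proof. by case: z. Qed.

Lemma normc_ge0 (z : C) : 0 <= normc z.
Proof. by have := normr_ge0 z; rewrite norm_normc ler0c. Qed.

Lemma normcX (z : C) k : normc (z ^+ k) = normc z ^+ k.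
Proof. by elim: k => [|k IH]; rewrite ?normc1 // !exprS normcM IH. Qed.

Lemma normc_real (k : R) : normc k%:C = `|k|.
Proof. by rewrite /normc /= expr0n /= addr0 sqrtr_sqr. Qed.

Lemma Re_mul_real (u : C) (k : R) : complex.Re (u * k%:C) = complex.Re u * k.
Proof. by case: u => a b /=; rewrite mulr0 subr0. Qed.

End ComplexModulus.

Section ScalarRecurrence.
Variable R : realType.
Local Notation C := R[i].

Definition cvgc0 (w : nat -> C) := forall eps : R, 0 < eps ->
  exists K, forall k, (K <= k)%N -> normc (w k) < eps.

Lemma exprn_eventually_lt (r eps : R) : 0 <= r -> r < 1 -> 0 < eps ->
  exists J, forall j, (J <= j)%N -> r ^+ j < eps.
Proof.
move=> r0 r1 eps0; have r1' : `|r| < 1 by rewrite ger0_norm.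
have [J _ HJ] := @cvgr0_norm_lt _ R^o _ _ _ (fun j => r ^+ j) (cvg_expr r1') eps eps0.
by exists J => j Jj; rewrite -(ger0_norm (exprn_ge0 j r0)); apply: HJ.
Qed.

Lemma cvgc0_affine_rec (l : C) (v w : nat -> C) : normc l < 1 -> cvgc0 v ->
  (forall n, w n.+1 = l * w n + v n) -> cvgc0 w.
Proof.
move=> l1 v0 w_rec eps eps0.
set r := normc l; have r0 : 0 <= r := normc_ge0 l.
have [K HK] : exists K, forall n, (K <= n)%N -> normc (v n) < (1 - r) * eps / 2.
  by apply: v0; rewrite divr_gt0 // mulr_gt0 // subr_gt0.
(* s n = |w n| - eps/2 contracts by the factor r beyond K *)
pose s n := normc (w n) - eps / 2.
have s_step n : (K <= n)%N -> s n.+1 <= r * s n.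
  move=> Kn; rewrite /s w_rec.
  have := HK n Kn; have := le_normcD (l * w n) (v n); rewrite normcM -/r.
  have := normc_ge0 (w n); nra.
have s_geo j : s (K + j)%N <= r ^+ j * `|s K|.
  elim: j => [|j IH]; first by rewrite addn0 expr0 mul1r ler_norm.
  rewrite addnS exprS -mulrA; apply: le_trans (s_step _ (leq_addr _ _)) _.
  by rewrite ler_wpM2l.
have [J HJ] : exists J, forall j, (J <= j)%N -> r ^+ j < eps / 2 / (`|s K| + 1).
  by apply: exprn_eventually_lt; rewrite ?divr_gt0 ?ltr_wpDl.
exists (K + J)%N => k KJk; have Kk : (K <= k)%N := leq_trans (leq_addr _ _) KJk.
have := s_geo (k - K)%N; rewrite subnKC //.
have := HJ (k - K)%N; rewrite leq_subRL // => /(_ KJk).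
rewrite ltr_pdivlMr ?ltr_wpDl // /s.
have := normr_ge0 (s K); have := exprn_ge0 (k - K) r0; nra.
Qed.
End ScalarRecurrence.

Section ShiftOperator.
Variable R : realType.
Local Notation C := R[i].
Implicit Types (p q : {poly C}) (w : nat -> C).

(* p(S) w, where S is the forward shift (S w) n = w n.+1. *)
Definition pshift p w n : C := \sum_(k < size p) p`_k * w (n + k)%N.

Lemma pshift_widen K p : (size p <= K)%N ->
  forall w n, pshift p w n = \sum_(k < K) p`_k * w (n + k)%N.
Proof.
move=> pK w n; rewrite /pshift (big_ord_widen _ (fun k => p`_k * w (n + k)%N) pK).
rewrite big_mkcond /=; apply: eq_bigr => k _.
by case: ifP => // /negbT; rewrite -leqNgt => /(nth_default 0) ->; rewrite mul0r.
Qed.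

Lemma eq_pshift p w1 w2 n : w1 =1 w2 -> pshift p w1 n = pshift p w2 n.
Proof. by move=> w12; apply: eq_bigr => k _; rewrite w12. Qed.

Lemma pshift0 w n : pshift 0 w n = 0.
Proof. by rewrite /pshift size_poly0 big_ord0. Qed.

Lemma pshiftC c w n : pshift c%:P w n = c * w n.
Proof. by rewrite (pshift_widen (size_polyC_leq1 c)) big_ord1 coefC addn0. Qed.

Lemma pshift1 w n : pshift 1 w n = w n.
Proof. by rewrite -polyC1 pshiftC mul1r. Qed.

Lemma pshiftD p q w n : pshift (p + q) w n = pshift p w n + pshift q w n.
Proof.
set K := maxn (size p) (size q).
rewrite !(@pshift_widen K) ?leq_maxl ?leq_maxr ?(leq_trans (size_polyD p q)) //.
by rewrite -big_split; apply: eq_bigr => k _; rewrite coefD mulrDl.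
Qed.

Lemma pshiftZ c p w n : pshift (c *: p) w n = c * pshift p w n.
Proof.
rewrite (pshift_widen (size_scale_leq c p)) mulr_sumr.
by apply: eq_bigr => k _; rewrite coefZ mulrA.
Qed.

Lemma pshiftN p w n : pshift (- p) w n = - pshift p w n.
Proof. by rewrite -scaleN1r pshiftZ mulN1r. Qed.

Lemma pshiftB p q w n : pshift (p - q) w n = pshift p w n - pshift q w n.
Proof. by rewrite pshiftD pshiftN. Qed.

Lemma pshiftMX p w n : pshift (p * 'X) w n = pshift p w n.+1.
Proof.
have pX : (size (p * 'X)%R <= (size p).+1)%N.
  by rewrite (leq_trans (size_polyMleq _ _)) // size_polyX addn2.
rewrite (pshift_widen pX) big_ord_recl coefMX eqxx mul0r add0r.
by apply: eq_bigr => k _; rewrite coefMX /= addnS.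
Qed.

Lemma pshiftX w n : pshift 'X w n = w n.+1.
Proof. by rewrite -['X]mul1r pshiftMX pshift1. Qed.

Lemma pshiftXn k w n : pshift 'X^k w n = w (n + k)%N.
Proof.
elim: k n => [|k IH] n; first by rewrite expr0 pshift1 addn0.
by rewrite exprSr pshiftMX IH addSnnS.
Qed.

Lemma pshiftM p q w n : pshift (p * q) w n = pshift p (pshift q w) n.
Proof.
elim/poly_ind: p n => [|p c IH] n; first by rewrite mul0r !pshift0.
by rewrite mulrDl mulrAC mul_polyC pshiftD pshiftZ pshiftMX IH pshiftD pshiftMX pshiftC.
Qed.

Lemma pshift_suml (I : finType) (f : I -> {poly C}) w n :
  pshift (\sum_i f i) w n = \sum_i pshift (f i) w n.
Proof.
apply: (big_rec2 (fun a b => pshift b w n = a)); first by rewrite pshift0.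
by move=> i y1 y2 _ <-; rewrite pshiftD.
Qed.

Lemma pshift_sumr (I : finType) p (f : I -> nat -> C) n :
  pshift p (fun t => \sum_i f i t) n = \sum_i pshift p (f i) n.
Proof.
by rewrite /pshift exchange_big; apply: eq_bigr => k _; rewrite mulr_sumr.
Qed.

End ShiftOperator.

Section StableRecurrence.
Variable R : realType.
Local Notation C := R[i].

Lemma cvgc0_prod_XsubC (rs : seq C) (w : nat -> C) :
  (forall r, r \in rs -> normc r < 1) ->
  (forall n, pshift (\prod_(r <- rs) ('X - r%:P)) w n = 0) -> cvgc0 w.
Proof.
elim: rs w => [|r rs IH] w rs1 w0.
  move=> eps eps0; exists 0%N => k _.
  by move: (w0 k); rewrite big_nil pshift1 => ->; rewrite normc0.
apply: (@cvgc0_affine_rec _ r (pshift ('X - r%:P) w)).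
- by apply: rs1; rewrite mem_head.
- apply: IH => [x xrs|n]; first by apply: rs1; rewrite inE xrs orbT.
  by rewrite -pshiftM mulrC -(w0 n) big_cons.
- by move=> n; rewrite pshiftB pshiftX pshiftC addrCA subrr addr0.
Qed.

Lemma cvgc0_pshift (q : {poly C}) (w : nat -> C) : q != 0 ->
  (forall r, root q r -> normc r < 1) -> (forall n, pshift q w n = 0) -> cvgc0 w.
Proof.
move=> q0 q_roots w0; have [rs q_split] := closed_field_poly_normal q.
have lc0 : lead_coef q != 0 by rewrite lead_coef_eq0.
apply: (@cvgc0_prod_XsubC rs) => [r r_rs|n].
  by apply: q_roots; rewrite [q]q_split rootZ // root_prod_XsubC.
by have /eqP := w0 n; rewrite [q]q_split pshiftZ mulf_eq0 (negPf lc0) => /eqP.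
Qed.

Variable N : nat.
Implicit Types (Q : 'M[{poly C}]_N) (z : nat -> 'cV[C]_N).

Definition mpshift Q z n : 'cV[C]_N :=
  \col_i \sum_j pshift (Q i j) (fun t => z t j 0) n.

Lemma eq_mpshift Q z1 z2 n : z1 =1 z2 -> mpshift Q z1 n = mpshift Q z2 n.
Proof.
move=> z12; apply/matrixP => i k; rewrite !mxE; apply: eq_bigr => j _.
by apply: eq_pshift => t; rewrite z12.
Qed.

Lemma mpshiftM Q1 Q2 z n : mpshift (Q1 *m Q2) z n = mpshift Q1 (mpshift Q2 z) n.
Proof.
apply/matrixP => i k; rewrite !mxE.
under eq_bigr => j _ do rewrite mxE pshift_suml.
rewrite exchange_big /=; apply: eq_bigr => l _.
under eq_pshift do rewrite mxE.
by rewrite pshift_sumr; apply: eq_bigr => j _; rewrite pshiftM.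
Qed.

Lemma mpshift_zero Q n : mpshift Q (fun=> 0) n = 0.
Proof.
apply/matrixP => i k; rewrite !mxE big1 // => j _.
by rewrite /pshift big1 // => l _; rewrite mxE mulr0.
Qed.

Lemma mpshift_scalar q z n i : mpshift q%:M z n i 0 = pshift q (fun t => z t i 0) n.
Proof.
rewrite mxE (bigD1 i) //= big1 ?addr0; first by rewrite mxE eqxx mulr1n.
by move=> j /negPf ji; rewrite mxE eq_sym ji mulr0n pshift0.
Qed.

Lemma cv0_componentwise z : (forall i, cvgc0 (fun t => z t i 0)) -> cv0 z.
Proof.
move=> z0 eps eps0.
have /fin_all_exists [K HK] : forall i, exists K, forall k, (K <= k)%N ->
    normc (z k i 0) < eps by move=> i; apply: z0.
exists (\max_i K i) => k Kk i; rewrite norm_normc ltcR; apply: HK.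
exact: leq_trans (leq_bigmax i) Kk.
Qed.

Lemma mpshift_cv0 Q z : \det Q != 0 -> (forall r, root (\det Q) r -> normc r < 1) ->
  (forall n, mpshift Q z n = 0) -> cv0 z.
Proof.
move=> Q0 Q_roots z0; apply: cv0_componentwise => i.
apply: (cvgc0_pshift Q0 Q_roots) => n.
by rewrite -mpshift_scalar -mul_adj_mx mpshiftM (eq_mpshift _ _ z0) mpshift_zero mxE.
Qed.

End StableRecurrence.

Section Hermitian.
Variable R : realType.
Local Notation C := R[i].

Lemma ctrmxM m n k (X : 'M[C]_(m, n)) (Y : 'M[C]_(n, k)) :
  ctrmx (X *m Y) = ctrmx Y *m ctrmx X.
Proof. by rewrite /ctrmx map_mxM trmx_mul. Qed.

Lemma ctrmxZ m n (c : C) (X : 'M[C]_(m, n)) : ctrmx (c *: X) = c^*%C *: ctrmx X.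
Proof. by apply/matrixP => i j; rewrite !mxE rmorphM. Qed.

Lemma ctrmxK m n (X : 'M[C]_(m, n)) : ctrmx (ctrmx X) = X.
Proof. by apply/matrixP => i j; rewrite !mxE conjcK. Qed.

Lemma ctrmx_diag_real n (f : R -> R) (d : 'rV[R]_n) :
  ctrmx (diag_mx (map_mx (fun e => (f e)%:C) d)) = diag_mx (map_mx (fun e => (f e)%:C) d).
Proof.
apply/matrixP => i j; rewrite !mxE eq_sym.
by case: eqP => [->|_]; rewrite ?mulr1n ?mulr0n ?conjc_real ?conjc0.
Qed.

Variable n : nat.
Implicit Types (x y : 'cV[C]_n) (M : 'M[C]_n).

Lemma sesq_mulmx x y M X Y :
  sesq (X *m x) M (Y *m y) = sesq x (ctrmx X *m M *m Y) y.
Proof. by rewrite /sesq ctrmxM !mulmxA. Qed.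

Lemma sesqZ x y M (a b : C) : sesq (a *: x) M (b *: y) = a^*%C * b * sesq x M y.
Proof. by rewrite /sesq ctrmxZ -!scalemxAl -scalemxAr !mxE mulrA. Qed.

Lemma sesq_lin x M y1 y2 y3 (a1 a2 a3 : C) :
  sesq x M (a1 *: y1 + a2 *: y2 - a3 *: y3) =
  a1 * sesq x M y1 + a2 * sesq x M y2 - a3 * sesq x M y3.
Proof. by rewrite /sesq !mulmxDr mulmxN -!scalemxAr !mxE. Qed.

Lemma sesq1_ge0 x : 0 <= sesq x 1%:M x.
Proof.
rewrite /sesq mulmx1 mxE; apply: sumr_ge0 => i _.
by rewrite !mxE mulrC mulcJ_ge0.
Qed.

Lemma sesq1_gt0 x : x != 0 -> 0 < sesq x 1%:M x.
Proof.
move=> x0; rewrite lt_def sesq1_ge0 andbT; apply: contra x0 => /eqP.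
have term_ge0 (i : 'I_n) : 0 <= ctrmx x 0 i * x i 0 by rewrite !mxE mulrC mulcJ_ge0.
rewrite /sesq mulmx1 mxE => /psumr_eq0P x_eq0; apply/eqP/matrixP => i k.
have /eqP := x_eq0 (fun j _ => term_ge0 j) i isT.
by rewrite ord1 !mxE mulrC -normCK sqrf_eq0 normr_eq0 => /eqP.
Qed.

Lemma fov_disc_sesq_lt M x : (forall z, fov M z -> unit_disc z) -> x != 0 ->
  normc (sesq x M x) < complex.Re (sesq x 1%:M x).
Proof.
move=> M_disc x0; have := sesq1_gt0 x0.
set be := sesq x 1%:M x => be_gt0.
have beE : be = (complex.Re be)%:C by rewrite RRe_real ?gtr0_real.
have b0 : 0 < complex.Re be by move: be_gt0; rewrite ltcE => /andP[].
pose s := (Num.sqrt (complex.Re be))^-1.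
have s0 : 0 < s * s by rewrite mulr_gt0 ?invr_gt0 ?sqrtr_gt0.
have ssb : s * s * complex.Re be = 1.
  by rewrite -invfM -expr2 sqr_sqrtr ?ltW // mulVf ?gt_eqF.
have sx1 : sesq (s%:C *: x) 1%:M (s%:C *: x) = 1.
  by rewrite sesqZ conjc_real -/be beE -!rmorphM ssb.
have := M_disc _ (ex_intro _ _ (conj sx1 erefl)).
rewrite /unit_disc sesqZ conjc_real -rmorphM norm_normc normcM normc_real.
by rewrite ger0_norm ?ltW // -(rmorph1 (real_complex R)) ltcR -ssb ltr_pM2l.
Qed.
End Hermitian.

Section SpectralPower.
Variable R : realType.
Local Notation C := R[i].
Variables (n : nat) (U : 'M[C]_n) (d : 'rV[R]_n).
Hypotheses (U_unitary : unitary_mx U) (d_gt0 : forall j, 0 < d 0 j).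
Local Notation A_ := (spec_pow U d).

Lemma spec_powD s t : A_ s *m A_ t = A_ (s + t).
Proof.
have UU : ctrmx U *m U = 1%:M by apply: mulmx1C.
rewrite /spec_pow -!mulmxA (mulmxA (ctrmx U)) UU mul1mx (mulmxA (diag_mx _)) mulmx_diag.
congr (_ *m (diag_mx _ *m _)); apply/matrixP => i j.
by rewrite !mxE ord1 powRD ?(gt_eqF (d_gt0 j)) ?implybT // rmorphM.
Qed.

Lemma spec_pow0 : A_ 0 = 1%:M.
Proof.
rewrite /spec_pow (_ : map_mx _ d = const_mx 1) ?diag_const_mx ?mulmx1 //.
by apply/matrixP => i j; rewrite !mxE powRr0.
Qed.

Lemma spec_pow1 A : spectral_decomp A U d -> A_ 1 = A.
Proof.
move=> [_ ->]; congr (_ *m diag_mx _ *m _); apply/matrixP => i j.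
by rewrite !mxE powRr1 // ord1 ltW.
Qed.

Lemma ctrmx_spec_pow s : ctrmx (A_ s) = A_ s.
Proof.
by rewrite /spec_pow !ctrmxM ctrmxK ctrmx_diag_real mulmxA.
Qed.

Lemma sesq_spec_pow_ge0 x s : 0 <= sesq x (A_ s) x.
Proof.
have -> : A_ s = ctrmx (A_ (s / 2)) *m 1%:M *m A_ (s / 2).
  by rewrite ctrmx_spec_pow mulmx1 spec_powD -splitr.
by rewrite -sesq_mulmx sesq1_ge0.
Qed.

End SpectralPower.

Section ThetaCharacteristic.
Variable R : realType.
Local Notation C := R[i].
Variables (h theta : R).

Definition theta_mix (z : C) : C := (h * theta)%:C * z + (h * (1 - theta))%:C.

Lemma theta_mix_neq0 z : 0 < h -> 1 / 2 < theta -> theta <= 1 ->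
  1 <= normc z -> theta_mix z != 0.
Proof.
move=> h_gt0 theta_gt theta_le1 z1; have t0 : 0 <= theta by lra.
have t1 : 0 <= 1 - theta by lra.
apply/eqP; rewrite /theta_mix => /(canRL (addrK _)); rewrite add0r.
move/(congr1 (@normc _)); rewrite normcM normcN !normc_real.
rewrite !ger0_norm ?mulr_ge0 ?(ltW h_gt0) //.
have : 0 <= h * theta * (normc z - 1) by rewrite !mulr_ge0 ?subr_ge0 ?(ltW h_gt0).
have : 0 < h * (2 * theta - 1) by rewrite mulr_gt0 //; lra.
nra.
Qed.

(* Re ((z - 1) conj (theta z + 1 - theta)) >= (|z| - 1) (theta |z| + 1 - theta). *)
Lemma theta_mix_Re_ge0 z : 0 < h -> 1 / 2 < theta -> theta <= 1 ->
  1 <= normc z -> 0 <= complex.Re ((z - 1) * (theta_mix z)^*%C).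
Proof.
move=> h_gt0 theta_gt theta_le1; case: z => x y; rewrite /normc /theta_mix /=.
set r := Num.sqrt _ => r1.
have r2 : r ^+ 2 = x ^+ 2 + y ^+ 2 by rewrite sqr_sqrtr // addr_ge0 ?sqr_ge0.
have xr : x <= r.
  apply: le_trans (ler_norm x) _; rewrite -sqrtr_sqr.
  by apply: ler_wsqrtr; rewrite lerDl sqr_ge0.
have quad_ge0 : 0 <= h * ((r - 1) * (theta * r + 1 - theta)).
  by rewrite mulr_ge0 ?(ltW h_gt0) // mulr_ge0 ?subr_ge0 //; nra.
have lin_ge0 : 0 <= h * ((2 * theta - 1) * (r - x)).
  by rewrite mulr_ge0 ?(ltW h_gt0) // mulr_ge0 ?subr_ge0 //; lra.
have hr2 : h * theta * r ^+ 2 = h * theta * (x ^+ 2 + y ^+ 2) by rewrite r2.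
nra.
Qed.

(* After multiplication by conj mu the equation reads z^m L = |mu|^2 ga, but
   |z^m L| >= |L| >= Re L >= |mu|^2 be > |mu|^2 |ga|. *)
Lemma theta_scalar_neq0 m z (al be ga : C) :
  0 < h -> 1 / 2 < theta -> theta <= 1 -> 1 <= normc z ->
  0 <= al -> 0 <= be -> normc ga < complex.Re be ->
  z ^+ m * (z - 1) * al + z ^+ m * theta_mix z * be - theta_mix z * ga != 0.
Proof.
move=> h_gt0 theta_gt theta_le1 z1 al0 be0 ga_lt; set mu := theta_mix z.
have mu0 : mu != 0 := theta_mix_neq0 h_gt0 theta_gt theta_le1 z1.
set L := (z - 1) * mu^*%C * al + mu * mu^*%C * be.
have mu2 : mu * mu^*%C = (normc mu ^+ 2)%:C by rewrite -normCK norm_normc rmorphXn.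
apply/eqP => /(congr1 (fun e => mu^*%C * e)); rewrite mulr0 => E.
have {E} : z ^+ m * L = (normc mu ^+ 2)%:C * ga.
  by rewrite -mu2; apply/eqP; rewrite -subr_eq0; apply/eqP; rewrite -E /L; ring.
move/(congr1 (@normc _)).
rewrite normcM normcX normcM normc_real ger0_norm ?exprn_ge0 ?normc_ge0 //.
have ReL : complex.Re L =
    complex.Re ((z - 1) * mu^*%C) * complex.Re al + normc mu ^+ 2 * complex.Re be.
  rewrite /L mu2 -{1}(RRe_real (ger0_real al0)) -{1}(RRe_real (ger0_real be0)) -rmorphM.
  by rewrite raddfD /= !Re_mul_real.
have ReL_le : complex.Re L <= normc L.
  by apply: le_trans (ler_norm _) _; rewrite -lecR -norm_normc normc_ge_Re.
have ReQ := theta_mix_Re_ge0 h_gt0 theta_gt theta_le1 z1.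
have Re_al : 0 <= complex.Re al by move: al0; rewrite lecE => /andP[].
have mu2_gt0 : 0 < normc mu ^+ 2.
  by rewrite exprn_gt0 // lt_def normc_ge0 andbT; apply: contra mu0 => /eqP/eq0_normc ->.
have zm1 : 1 <= normc z ^+ m by rewrite exprn_ege1.
have := normc_ge0 L; have := mulr_ge0 ReQ Re_al.
have : normc mu ^+ 2 * normc ga < normc mu ^+ 2 * complex.Re be by rewrite ltr_pM2l.
nra.
Qed.
End ThetaCharacteristic.

Section ThetaMethod.
Variable R : realType.
Local Notation C := R[i].
Variables (N : nat) (A B : 'M[C]_N) (h theta : R) (m : nat).
Local Notation b := (h * theta)%:C.
Local Notation a := (h * (1 - theta))%:C.

Definition theta_charmx : 'M[{poly C}]_N := \matrix_(i, j)
  ((1%:M + b *: A) i j *: 'X^(m.+1) + (a *: A - 1%:M) i j *: 'X^m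
   - (b *: B) i j *: 'X - ((a *: B) i j)%:P).

Lemma mpshift_theta_charmx z n : theta_rec A B theta 0 m h z ->
  mpshift theta_charmx z n = 0.
Proof.
move=> /(_ n); rewrite subr0 rmorph1 rmorph0 !scale1r !scale0r !addr0 => zrec.
have -> : mpshift theta_charmx z n = (1%:M + b *: A) *m z (n + m).+1
    + (a *: A - 1%:M) *m z (n + m)%N - (b *: B) *m z n.+1 - (a *: B) *m z n.
  apply/matrixP => i k; rewrite ord1 !mxE -big_split -!sumrB /=.
  apply: eq_bigr => j _.
  by rewrite !mxE !pshiftB !pshiftD !pshiftZ !pshiftXn pshiftX pshiftC addnS.
rewrite mulmxDl mulmxBl !mul1mx -!scalemxAl {1}zrec.
move: (z _) (A *m _) (A *m _) (B *m _) (B *m _) a b => y Ay Ay' By By' a' b'.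
by rewrite !scalerDr !scalerN; apply/matrixP => i k; rewrite !mxE; ring.
Qed.

Lemma horner_theta_charmx x : map_mx (horner_eval x) theta_charmx =
  (x ^+ m * (x - 1)) *: 1%:M + (x ^+ m * theta_mix h theta x) *: A
  - theta_mix h theta x *: B.
Proof.
apply/matrixP => i j; rewrite !mxE /horner_eval !hornerE /theta_mix /=.
by move: ((i == j)%:R) => e; rewrite exprS; ring.
Qed.

End ThetaMethod.

Section FieldOfValuesCondition.
Variable R : realType.
Local Notation C := R[i].
Variables (N : nat) (A B U : 'M[C]_N) (d : 'rV[R]_N) (p : R).
Hypotheses (A_spec : spectral_decomp A U d) (d_gt0 : forall j, 0 < d 0 j).
Local Notation A_ := (spec_pow U d).
Hypothesis fov_in_disc :
  forall z, fov (A_ (p / 2 - 1) *m B *m A_ (- (p / 2))) z -> unit_disc z.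

Let U_unitary : unitary_mx U := A_spec.1.
Let A_D := spec_powD U_unitary d_gt0.

(* With x = A^(-p/2) w, the quadratic forms of A^(p-1), A^(p-1) A and
   A^(p-1) B at x become w^* A^(-1) w, w^* w and w^* A^(p/2-1) B A^(-p/2) w. *)
Lemma theta_det_neq0 h theta m (z : C) :
  0 < h -> 1 / 2 < theta -> theta <= 1 -> 1 <= normc z ->
  \det ((z ^+ m * (z - 1)) *: 1%:M + (z ^+ m * theta_mix h theta z) *: A
        - theta_mix h theta z *: B) != 0.
Proof.
move=> h_gt0 theta_gt theta_le1 z1; set mu := theta_mix h theta z.
apply/negP; rewrite -det_tr => /det0P [v v0 /(congr1 trmx)].
rewrite trmx_mul trmxK trmx0 mulmxBl mulmxDl -!scalemxAl mul1mx.
have : v^T != 0 by rewrite trmx_eq0.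
move: (v^T) => x x0 Px {v v0}.
pose Y := A_ (- (p / 2)).
have [w xE w0] : exists2 w, x = Y *m w & w != 0.
  have xE : x = Y *m (A_ (p / 2) *m x).
    by rewrite mulmxA A_D addNr (spec_pow0 d U_unitary) mul1mx.
  exists (A_ (p / 2) *m x) => //.
  by apply: contraNneq x0 => w0; rewrite xE w0 mulmx0.
have YGY : ctrmx Y *m A_ (p - 1) *m Y = A_ (-1).
  by rewrite ctrmx_spec_pow !A_D; congr A_; lra.
have YGAY : ctrmx Y *m A_ (p - 1) *m (A *m Y) = 1%:M.
  rewrite -(spec_pow1 d_gt0 A_spec) ctrmx_spec_pow mulmxA !A_D.
  by rewrite -(spec_pow0 d U_unitary); congr A_; lra.
have YGBY : ctrmx Y *m A_ (p - 1) *m (B *m Y) = A_ (p / 2 - 1) *m B *m Y.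
  have -> : p / 2 - 1 = - (p / 2) + (p - 1) by lra.
  by rewrite ctrmx_spec_pow A_D mulmxA.
have sesq0 : sesq x (A_ (p - 1)) 0 = 0 by rewrite /sesq mulmx0 mxE.
have := congr1 (sesq x (A_ (p - 1))) Px.
rewrite sesq_lin sesq0 xE (mulmxA A) (mulmxA B) !sesq_mulmx YGY YGAY YGBY.
apply/eqP; apply: theta_scalar_neq0 => //.
- exact: sesq_spec_pow_ge0.
- exact: sesq1_ge0.
- exact: fov_disc_sesq_lt fov_in_disc w0.
Qed.

Lemma theta_charmx_roots h theta m : 0 < h -> 1 / 2 < theta -> theta <= 1 ->
  forall r, root (\det (theta_charmx A B h theta m)) r -> normc r < 1.
Proof.
move=> h_gt0 theta_gt theta_le1 r; apply: contraTT; rewrite -leNgt => r1.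
rewrite rootE -[_.[r]]/(horner_eval r _) -det_map_mx horner_theta_charmx.
exact: theta_det_neq0.
Qed.

End FieldOfValuesCondition.

Theorem mainTheorem3 (R : realType) (N : nat) (tau : R) (A B : 'M[R[i]]_N)
    (theta : R) :
  0 < tau -> posdef A -> 1 / 2 < theta -> theta <= 1 ->
  (exists p : R, exists (U : 'M[R[i]]_N) (d : 'rV[R]_N),
      spectral_decomp A U d /\ (forall j, 0 < d 0 j) /\
      (forall z, fov (spec_pow U d (p / 2 - 1) *m B *m spec_pow U d (- (p / 2))) z ->
                 unit_disc z)) ->
  forall m : nat, (0 < m)%N -> theta_stable A B theta 0 m (tau / m%:R).
Proof.
(* positive definiteness of A is already carried by the spectral data (U, d > 0) *)
move=> tau_gt0 _ theta_gt theta_le1 [p [U [d [A_spec [d_gt0 fov_in_disc]]]]] m m_gt0.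
move=> z zrec; have h_gt0 : 0 < tau / m%:R by rewrite divr_gt0 // ltr0n.
have roots_lt1 :=
  theta_charmx_roots A_spec d_gt0 fov_in_disc (m := m) h_gt0 theta_gt theta_le1.
apply: (mpshift_cv0 _ roots_lt1) => [|n]; last exact: mpshift_theta_charmx.
apply/negP => /eqP det0; have := roots_lt1 1.
by rewrite det0 root0 normc1 ltxx => /(_ isT).
Qed.
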